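(* Let $F$ be an almost-bipartite graph, let $b$ be an integer with $b>|F|$, and let $H$ be a graph. Then $H\vee bK_1$ is $F$-free if and only if $H\in\mathcal{M}_F$.
   Context: All graphs are finite and simple. $H\vee bK_1$ is the join of $H$ with an independent set of $b$ vertices (every vertex of $H$ adjacent to every one of the $b$ new vertices). A graph $F$ is almost-bipartite if it can be made bipartite by removing at most one edge. For such $F$, $\mathcal{A}_F$ is the family of subgraphs of $F$ induced by $V(F)\setminus I$, where $I$ ranges over all maximal independent sets of $F$; $\mathcal{M}_F$ is the family of all graphs (possibly with isolated vertices) containing no subgraph isomorphic to a member of $\mathcal{A}_F$. $F$-free means no subgraph isomorphic to $F$; $|F|$ is the number of vertices of $F$. *)

From mathcomp Require Import all_boot.
Set Implicit Arguments. Unset Strict Implicit. Unset Printing Implicit Defensive.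

Record sgraph := SGraph {
  vert : finType;
  adj : rel vert;
  adj_sym : forall x y, adj x y = adj y x;
  adj_irr : irreflexive adj }.

Definition subgraph_of (F G : sgraph) : Prop :=
  exists f : vert F -> vert G, injective f /\
    forall x y, adj x y -> adj (f x) (f y).

Definition Ffree (F G : sgraph) : Prop := ~ subgraph_of F G.

Definition join_adj (H : sgraph) (b : nat) : rel (vert H + 'I_b)%type :=
  fun u v => match u, v with
  | inl x, inl y => adj x y
  | inl _, inr _ => true
  | inr _, inl _ => true
  | inr _, inr _ => false
  end.

Lemma join_adj_sym H b x y : @join_adj H b x y = join_adj y x.
Proof. by case: x; case: y => //= *; rewrite adj_sym. Qed.

Lemma join_adj_irr H b : irreflexive (@join_adj H b).
Proof. by case => //= x; rewrite adj_irr. Qed.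

Definition join_indep (H : sgraph) (b : nat) : sgraph :=
  SGraph (@join_adj_sym H b) (@join_adj_irr H b).

Definition ind_adj (G : sgraph) (S : {set vert G}) : rel {x : vert G | x \in S} :=
  fun u v => adj (val u) (val v).

Lemma ind_adj_sym G S x y : @ind_adj G S x y = ind_adj y x.
Proof. by rewrite /ind_adj adj_sym. Qed.

Lemma ind_adj_irr G S : irreflexive (@ind_adj G S).
Proof. by move=> x; rewrite /ind_adj adj_irr. Qed.

Definition induced (G : sgraph) (S : {set vert G}) : sgraph :=
  SGraph (@ind_adj_sym G S) (@ind_adj_irr G S).

Definition independent (G : sgraph) (I : {set vert G}) : Prop :=
  forall x y, x \in I -> y \in I -> ~~ adj x y.

Definition maximal_independent (G : sgraph) (I : {set vert G}) : Prop :=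
  independent I /\
  forall J : {set vert G}, independent J -> I \subset J -> J = I.

(* Almost bipartite: removing at most one edge {u,v} leaves a bipartite graph,
   i.e. there is a 2-colouring whose only possible monochromatic edge is uv. *)
Definition almost_bipartite (F : sgraph) : Prop :=
  exists (c : vert F -> bool) (u v : vert F),
    forall x y, adj x y -> c x = c y ->
      (x = u /\ y = v) \/ (x = v /\ y = u).

(* A_F membership witnessed by a maximal independent set I: F[V(F) \ I]. *)
(* M_F: graphs containing no subgraph isomorphic to a member of A_F. *)
Definition in_MF (F H : sgraph) : Prop :=
  forall I : {set vert F}, maximal_independent I ->
    ~ subgraph_of (induced (~: I)) H.

From mathcomp Require Import all_boot.
Set Implicit Arguments. Unset Strict Implicit. Unset Printing Implicit Defensive.

(* An embedding f of F into H \/ bK_1 sends an independent set of F to the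
   b new vertices; enlarging it to a maximal independent set I, f maps
   F - I into H, so F - I lies in A_F and embeds in H.  Conversely, if F - I
   embeds in H for an independent I, send the vertices of I injectively to
   the b >= |F| new vertices, which are adjacent to all of H. *)

Section Independence.

Variable G : sgraph.

Definition indepb (I : {set vert G}) : bool :=
  [forall x in I, forall y in I, ~~ adj x y].

Lemma indepbP (I : {set vert G}) : reflect (independent I) (indepb I).
Proof.
apply: (iffP forall_inP) => [indI x y xI yI | indI x xI].
  by have /forall_inP := indI x xI; apply.
by apply/forall_inP => y yI; apply: indI.
Qed.

Lemma independent_extend_maximal (J : {set vert G}) :
  independent J -> exists2 I, maximal_independent I & J \subset I.
Proof.
move/indepbP/maxset_exists => [I /maxsetP [/indepbP indI maxI] JI].
exists I => //; split=> // K /indepbP indK IK.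
exact: maxI.
Qed.

End Independence.

Section JoinEmbeddings.

Variables (F H : sgraph) (b : nat).

Definition join_side (u : vert (join_indep H b)) : bool :=
  if u is inr _ then true else false.

Lemma independent_preim_join_side (f : vert F -> vert (join_indep H b)) :
  (forall x y, adj x y -> adj (f x) (f y)) ->
  independent [set x | join_side (f x)].
Proof.
move=> fhom x y; rewrite !inE => fx fy; apply/negP => /fhom.
by case: (f x) fx => // i _; case: (f y) fy.
Qed.

Lemma induced_subgraph_of_join (f : vert F -> vert (join_indep H b))
    (S : {set vert F}) :
  injective f -> (forall x y, adj x y -> adj (f x) (f y)) ->
  [set x | join_side (f x)] \subset S -> subgraph_of (induced (~: S)) H.
Proof.
move=> finj fhom sideS.
have inl_out (s : {x | x \in ~: S}) : exists h, f (val s) == inl h.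
  case: s => x /=; rewrite inE => xS.
  have : x \notin [set x | join_side (f x)] by apply: contra xS; apply: subsetP.
  by rewrite inE; case: (f x) => // h _; exists h.
pose g s := xchoose (inl_out s).
have fE s : f (val s) = inl (g s) by exact: eqP (xchooseP (inl_out s)).
exists g; split.
  by move=> s t eq_st; apply/val_inj/finj; rewrite !fE eq_st.
by move=> s t /fhom; rewrite !fE.
Qed.

Lemma subgraph_join_of_induced (I : {set vert F}) :
  independent I -> #|vert F| <= b ->
  subgraph_of (induced (~: I)) H -> subgraph_of F (join_indep H b).
Proof.
move=> indI leFb [g [ginj ghom]].
pose f x : vert (join_indep H b) :=
  if insub x is Some s then inl (g s) else inr (widen_ord leFb (enum_rank x)).
exists f; split.
  move=> x y; rewrite /f.
  case: insubP => [s _ <-|_]; case: insubP => [t _ <-|_] //=.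
    by move=> [/ginj ->].
  by move=> [/ord_inj/enum_rank_inj].
move=> x y xy; rewrite /f.
case: insubP => [s _ xE|]; case: insubP => [t _ yE|] //=.
  by apply: ghom; rewrite /= /ind_adj xE yE.
rewrite !inE !negbK => yI xI.
by have := indI x y xI yI; rewrite xy.
Qed.

End JoinEmbeddings.

Theorem lemma4p2 (F H : sgraph) (b : nat) :
  almost_bipartite F -> #|vert F| < b ->
  (Ffree F (join_indep H b) <-> in_MF F H).
Proof.
move=> _ /ltnW leFb; split.
  move=> Ffree_join I [indI _] embI.
  exact/Ffree_join/(subgraph_join_of_induced indI leFb embI).
move=> MF [f [finj fhom]].
have [I maxI sideI] :=
  independent_extend_maximal (independent_preim_join_side fhom).
exact: MF I maxI (induced_subgraph_of_join finj fhom sideI).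
Qed.
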